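(* For an integer $z\ge1$ let $$\varphi_z(v)=\frac{1-\frac{4q^2-h^z}{2q(1-2q)}(e^v-1)}{1-\frac{2q-h^z}{1-2q}(e^v-1)},\qquad \psi_z(v)=\frac{e^v}{1-\frac{2q-h^z}{1-2q}(e^v-1)},$$ and $m_z=h^z/(2q)$. For $\log(1-2q(1-2q))<v<\log(1+2q(1-2q))$ we have $$\varphi_z(v)=\exp\big(m_z(v+O(v^2))\big),\qquad v\to0,$$ where the $O(v^2)$ term is uniform in $z\ge1$, and $$\psi_z(v)\le\frac{1+|e^v-1|}{1-\frac{|e^v-1|}{1-2q}}.$$
   Context: Let $0<q<p<1$ with $p+q=1$ and $h=q/p$. *)

From Stdlib Require Import Reals Lra.
Open Scope R_scope.

Definition hh (p q : R) : R := q / p.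

Definition phi_z (p q : R) (z : nat) (v : R) : R :=
  (1 - (4 * q ^ 2 - hh p q ^ z) / (2 * q * (1 - 2 * q)) * (exp v - 1))
  / (1 - (2 * q - hh p q ^ z) / (1 - 2 * q) * (exp v - 1)).

Definition psi_z (p q : R) (z : nat) (v : R) : R :=
  exp v / (1 - (2 * q - hh p q ^ z) / (1 - 2 * q) * (exp v - 1)).

Definition m_z (p q : R) (z : nat) : R := hh p q ^ z / (2 * q).

Definition in_range (q v : R) : Prop :=
  ln (1 - 2 * q * (1 - 2 * q)) < v < ln (1 + 2 * q * (1 - 2 * q)).

(* With x = e^v - 1, both phi_z and psi_z are Moebius functions of x:
   phi_z(v) = (1 - c x)/(1 - b x) with b - c = m_z and |b|, |c| bounded uniformly
   in z because 0 < h^z < 2q. Sandwiching log y between 1 - 1/y and y - 1 gives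
   log phi_z(v) = m_z (x + O(x^2)), and x = v + O(v^2). The bound on psi_z only
   uses 0 <= b <= 1/(1-2q) and |x| < 2q(1-2q) on the admissible range. *)

From Stdlib Require Import Reals Lra Psatz.
Open Scope R_scope.

Lemma ln_sandwich (y : R) : 0 < y -> 1 - / y <= ln y <= y - 1.
Proof.
  intros Hy; split.
  - pose proof (exp_ineq1_le (ln (/ y))) as H.
    rewrite exp_ln, ln_Rinv in H by (try apply Rinv_0_lt_compat; lra). lra.
  - pose proof (exp_ineq1_le (ln y)) as H. rewrite exp_ln in H by lra. lra.
Qed.

Lemma Rabs_bounds (a : R) : - Rabs a <= a <= Rabs a.
Proof. split; [pose proof (Rle_abs (- a)); rewrite Rabs_Ropp in *; lra | apply Rle_abs]. Qed.

Lemma exp_sub1_sub_id_le (v : R) : Rabs v <= 1 / 2 -> Rabs (exp v - 1 - v) <= 2 * v ^ 2.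
Proof.
  intros Hv. destruct (Rabs_bounds v) as [Hv1 Hv2].
  pose proof (exp_ineq1_le v) as Hlow.
  (* e^v e^{-v} = 1 and e^{-v} >= 1 - v give e^v <= 1/(1 - v) *)
  assert (Hup : exp v * (1 - v) <= 1).
  { assert (Hinv : exp v * exp (- v) = 1)
      by (rewrite <- exp_plus, Rplus_opp_r; apply exp_0).
    rewrite <- Hinv. apply Rmult_le_compat_l; [apply Rlt_le, exp_pos|].
    pose proof (exp_ineq1_le (- v)); lra. }
  apply Rabs_le; split; nra.
Qed.

Lemma Rabs_mul_div_le (b K u D : R) :
  Rabs b <= K -> 0 <= u -> 1 / 2 <= D -> Rabs (b * u / D) <= 2 * K * u.
Proof.
  intros Hb Hu HD. destruct (Rabs_bounds b) as [Hb1 Hb2].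
  assert (HiD : 0 < / D <= 2).
  { split; [apply Rinv_0_lt_compat; lra|].
    replace 2 with (/ (1 / 2)) by field. apply Rinv_le_contravar; lra. }
  assert (Hw : 0 <= u * / D <= 2 * u) by (split; nra).
  unfold Rdiv. rewrite Rmult_assoc. apply Rabs_le; split; nra.
Qed.

Lemma ln_moebius_approx (b c K x : R) :
  0 < b - c -> Rabs b <= K -> Rabs c <= K -> K * Rabs x <= 1 / 2 ->
  0 < (1 - c * x) / (1 - b * x) /\
  Rabs (ln ((1 - c * x) / (1 - b * x)) / (b - c) - x) <= 2 * K * x ^ 2.
Proof.
  intros Hm Hb Hc HKx.
  destruct (Rabs_bounds x) as [Hx1 Hx2].
  destruct (Rabs_bounds b) as [Hb1 Hb2]. destruct (Rabs_bounds c) as [Hc1 Hc2].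
  assert (HD : 1 / 2 <= 1 - b * x) by nra.
  assert (HN : 1 / 2 <= 1 - c * x) by nra.
  assert (Hy : 0 < (1 - c * x) / (1 - b * x)) by (apply Rdiv_lt_0_compat; lra).
  split; [exact Hy|].
  destruct (ln_sandwich _ Hy) as [Hlow Hup].
  set (L := ln ((1 - c * x) / (1 - b * x))) in *.
  (* dividing the sandwich by b - c puts L / (b - c) between x / (1 - c x)
     and x / (1 - b x), i.e. within c x^2 / (1 - c x) and b x^2 / (1 - b x) of x *)
  assert (Hlow' : x + c * x ^ 2 / (1 - c * x) <= L / (b - c)).
  { apply (Rmult_le_reg_l (b - c)); [lra|].
    replace ((b - c) * (L / (b - c))) with L by (field; lra).
    replace ((b - c) * (x + c * x ^ 2 / (1 - c * x)))
      with (1 - / ((1 - c * x) / (1 - b * x))) by (field; lra). lra. }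
  assert (Hup' : L / (b - c) <= x + b * x ^ 2 / (1 - b * x)).
  { apply (Rmult_le_reg_l (b - c)); [lra|].
    replace ((b - c) * (L / (b - c))) with L by (field; lra).
    replace ((b - c) * (x + b * x ^ 2 / (1 - b * x)))
      with ((1 - c * x) / (1 - b * x) - 1) by (field; lra). lra. }
  assert (Hx2pos : 0 <= x ^ 2) by nra.
  destruct (Rabs_bounds (b * x ^ 2 / (1 - b * x))) as [_ Eb].
  destruct (Rabs_bounds (c * x ^ 2 / (1 - c * x))) as [Ec _].
  pose proof (Rabs_mul_div_le _ _ _ _ Hb Hx2pos HD).
  pose proof (Rabs_mul_div_le _ _ _ _ Hc Hx2pos HN).
  apply Rabs_le; split; lra.
Qed.

Lemma moebius_exp_sub1_eq_exp (b c K v : R) :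
  0 < b - c -> Rabs b <= K -> Rabs c <= K -> Rabs v < / (4 * K + 2) ->
  exists r : R, Rabs r <= (8 * K + 2) * v ^ 2 /\
    (1 - c * (exp v - 1)) / (1 - b * (exp v - 1)) = exp ((b - c) * (v + r)).
Proof.
  intros Hm Hb Hc Hv.
  assert (HK : 0 <= K) by (pose proof (Rabs_pos b); lra).
  assert (Hv' : Rabs v * (4 * K + 2) < 1).
  { replace 1 with (/ (4 * K + 2) * (4 * K + 2)) by (field; lra).
    apply Rmult_lt_compat_r; lra. }
  pose proof (Rabs_pos v) as Hv0.
  pose proof (exp_sub1_sub_id_le v ltac:(nra)) as Hexp.
  set (x := exp v - 1) in *.
  assert (Hvv : v ^ 2 = Rabs v * Rabs v) by (rewrite <- pow2_abs; ring).
  assert (Hx : Rabs x <= 2 * Rabs v).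
  { pose proof (Rabs_triang (x - v) v) as Htri.
    replace (x - v + v) with x in Htri by ring. nra. }
  assert (Hxx : x ^ 2 <= 4 * v ^ 2).
  { replace (x ^ 2) with (Rabs x * Rabs x)
      by (rewrite <- pow2_abs; ring).
    pose proof (Rabs_pos x). nra. }
  destruct (ln_moebius_approx b c K x Hm Hb Hc ltac:(nra)) as [Hpos Happrox].
  exists (ln ((1 - c * x) / (1 - b * x)) / (b - c) - v). split.
  - pose proof (Rabs_triang (ln ((1 - c * x) / (1 - b * x)) / (b - c) - x) (x - v)) as Htri.
    replace (ln ((1 - c * x) / (1 - b * x)) / (b - c) - x + (x - v))
      with (ln ((1 - c * x) / (1 - b * x)) / (b - c) - v) in Htri by ring.
    nra.
  - replace ((b - c) * (v + (ln ((1 - c * x) / (1 - b * x)) / (b - c) - v)))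
      with (ln ((1 - c * x) / (1 - b * x))) by (field; lra).
    now rewrite exp_ln.
Qed.

Lemma moebius_exp_le (b s x : R) :
  0 < s -> 0 <= b -> b * s <= 1 -> 0 < 1 + x -> Rabs x < s ->
  (1 + x) / (1 - b * x) <= (1 + Rabs x) / (1 - Rabs x / s).
Proof.
  intros Hs Hb Hbs Hx0 Hx. destruct (Rabs_bounds x) as [Hx1 Hx2].
  assert (Hws : Rabs x / s * s = Rabs x) by (field; lra).
  assert (Hbx : b * x <= Rabs x / s).
  { apply (Rmult_le_reg_r s); [lra|]. rewrite Hws.
    pose proof (Rabs_pos x).
    assert (0 <= b * s * (Rabs x - x)) by (apply Rmult_le_pos; nra).
    nra. }
  assert (Hw1 : Rabs x / s < 1).
  { apply (Rmult_lt_reg_r s); [lra|]. rewrite Hws. lra. }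
  apply (Rle_trans _ ((1 + x) / (1 - Rabs x / s))).
  - apply Rmult_le_compat_l; [lra|]. apply Rinv_le_contravar; lra.
  - apply Rmult_le_compat_r; [apply Rlt_le, Rinv_0_lt_compat|]; lra.
Qed.

Lemma abs_exp_sub1_lt (a v : R) :
  0 < a < 1 -> ln (1 - a) < v < ln (1 + a) -> Rabs (exp v - 1) < a.
Proof.
  intros Ha [Hl Hu].
  apply exp_increasing in Hl, Hu. rewrite exp_ln in Hl, Hu by lra.
  apply Rabs_def1; lra.
Qed.

Lemma hh_pow_bounds (p q : R) (z : nat) :
  0 < q -> q < p -> p + q = 1 -> (1 <= z)%nat -> 0 < hh p q ^ z < 2 * q.
Proof.
  intros Hq Hqp Hpq Hz.
  assert (Hh : 0 < hh p q < 2 * q).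
  { unfold hh. split; [apply Rdiv_lt_0_compat; lra|].
    apply (Rmult_lt_reg_r p); [lra|]. replace (q / p * p) with q by (field; lra). nra. }
  split; [apply pow_lt; lra|].
  destruct z as [|z]; [lia|].
  pose proof (pow_incr (hh p q) 1 z ltac:(lra)) as Hle. rewrite pow1 in Hle.
  simpl. nra.
Qed.

Lemma phi_coef_bounds (q t : R) :
  0 < q -> 2 * q < 1 -> 0 < t < 2 * q ->
  Rabs ((2 * q - t) / (1 - 2 * q)) <= / (2 * q * (1 - 2 * q)) /\
  Rabs ((4 * q ^ 2 - t) / (2 * q * (1 - 2 * q))) <= / (2 * q * (1 - 2 * q)).
Proof.
  intros Hq Hq2 Ht.
  assert (Hd : 0 < / (2 * q * (1 - 2 * q))) by (apply Rinv_0_lt_compat; nra).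
  unfold Rdiv.
  replace (/ (1 - 2 * q)) with (2 * q * / (2 * q * (1 - 2 * q))) by (field; lra).
  set (d := / (2 * q * (1 - 2 * q))) in *.
  assert (Hb : 0 <= (2 * q - t) * (2 * q) <= 1) by nra.
  assert (Hc : -1 <= 4 * q ^ 2 - t <= 1) by nra.
  split; apply Rabs_le; split; nra.
Qed.

Theorem lemma7p1 (p q : R) (hq : 0 < q) (hqp : q < p) (hp1 : p < 1)
  (hpq : p + q = 1) :
  (exists C delta : R, 0 < C /\ 0 < delta /\
     forall (z : nat) (v : R), (1 <= z)%nat -> in_range q v -> Rabs v < delta ->
       exists r : R, Rabs r <= C * v ^ 2 /\
         phi_z p q z v = exp (m_z p q z * (v + r)))
  /\
  (forall (z : nat) (v : R), (1 <= z)%nat -> in_range q v ->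
     psi_z p q z v <= (1 + Rabs (exp v - 1)) / (1 - Rabs (exp v - 1) / (1 - 2 * q))).
Proof.
  assert (Hq2 : 2 * q < 1) by lra.
  set (K := / (2 * q * (1 - 2 * q))).
  assert (HK : 0 < K) by (apply Rinv_0_lt_compat; nra).
  split.
  - exists (8 * K + 2), (/ (4 * K + 2)).
    split; [lra | split; [apply Rinv_0_lt_compat; lra|]].
    intros z v Hz _ Hv.
    pose proof (hh_pow_bounds p q z hq hqp hpq Hz) as Ht.
    destruct (phi_coef_bounds q _ hq Hq2 Ht) as [Hb Hc].
    assert (Hm : (2 * q - hh p q ^ z) / (1 - 2 * q)
              - (4 * q ^ 2 - hh p q ^ z) / (2 * q * (1 - 2 * q)) = m_z p q z)
      by (unfold m_z; field; lra).
    assert (Hmpos : 0 < m_z p q z) by (unfold m_z; apply Rdiv_lt_0_compat; lra).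
    unfold phi_z. rewrite <- Hm in Hmpos |- *.
    exact (moebius_exp_sub1_eq_exp _ _ _ _ Hmpos Hb Hc Hv).
  - intros z v Hz Hv.
    pose proof (hh_pow_bounds p q z hq hqp hpq Hz) as Ht.
    assert (Hx : Rabs (exp v - 1) < 1 - 2 * q).
    { pose proof (abs_exp_sub1_lt (2 * q * (1 - 2 * q)) v ltac:(nra) Hv). nra. }
    unfold psi_z. replace (exp v) with (1 + (exp v - 1)) at 1 by ring.
    apply moebius_exp_le; [lra | | | pose proof (exp_pos v); lra | exact Hx].
    + apply Rmult_le_pos; [lra | apply Rlt_le, Rinv_0_lt_compat; lra].
    + unfold Rdiv. rewrite Rmult_assoc, Rinv_l; lra.
Qed.
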